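(* Let $\mathbb{M}$ be a depth-1 graded monad on a category $\mathcal{C}$ for which the functor $\overline{M}_1\colon\mathit{EM}(M_0)\to\mathit{EM}(M_0)$ exists. Then for every $\mathcal{C}$-morphism $f\colon X\to M_kY$, one has $\overline{M}_1(f^*_0)=f^*_1$, where $f^*_0\colon(M_0X,\mu^{0,0}_X)\to(M_kY,\mu^{0,k}_Y)$ is viewed as a homomorphism of $M_0$-algebras and $\overline{M}_1(M_0X,\mu^{0,0}_X)=(M_1X,\mu^{0,1}_X)$, $\overline{M}_1(M_kY,\mu^{0,k}_Y)=(M_{k+1}Y,\mu^{0,k+1}_Y)$.
   Context: A graded monad $\mathbb{M}$ on $\mathcal{C}$: functors $M_n$ ($n\in\mathbb{N}$), unit $\eta\colon\mathit{Id}\to M_0$, multiplications $\mu^{n,k}\colon M_nM_k\to M_{n+k}$ with $\mu^{0,n}\eta M_n=\mathit{id}=\mu^{n,0}M_n\eta$ and $\mu^{n+k,m}\mu^{n,k}M_m=\mu^{n,k+m}M_n\mu^{k,m}$. Depth-1: for all $n$, $\mu^{1,n}_X$ is a coequalizer of $\mu^{1,0}M_nX$ and $M_1\mu^{0,n}_X\colon M_1M_0M_nX\to M_1M_nX$. Graded Kleisli star: $f^*_n=\mu^{n,k}_Y\cdot M_nf\colon M_nX\to M_{n+k}Y$. A graded $M_1$-algebra is $(A_0,A_1,a^{0,0},a^{0,1},a^{1,0})$ with $a^{m,k}\colon M_mA_k\to A_{m+k}$ satisfying $a^{0,m}\eta_{A_m}=\mathit{id}$ and $a^{m+r,k}\mu^{m,r}_{A_k}=a^{m,r+k}M_ma^{r,k}$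 whenever defined; homomorphisms are pairs $(f_0,f_1)$ commuting with all structure maps. $M_0$-algebras are Eilenberg–Moore algebras of $(M_0,\eta,\mu^{0,0})$. $\overline{M}_1$ sends an $M_0$-algebra $A$ to $(A_1,a^{0,1})$ where $(A,A_1,\dots)$ is the free graded $M_1$-algebra with $0$-part $A$ (assumed to exist), and sends an $M_0$-homomorphism $h$ to the unique $h_1$ such that $(h,h_1)$ is an $M_1$-homomorphism between the free $M_1$-algebras; for algebras $(M_nX,\mu^{0,n})$ the free $M_1$-algebra is $(M_nX,M_{n+1}X,\mu^{0,n},\mu^{0,n+1},\mu^{1,n})$. *)

From mathcomp Require Import all_boot.
Set Implicit Arguments. Unset Strict Implicit. Unset Printing Implicit Defensive.

Record Category := {
  Ob :> Type;
  Hom : Ob -> Ob -> Type;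
  idm : forall X, Hom X X;
  comp : forall X Y Z, Hom Y Z -> Hom X Y -> Hom X Z;  (* comp g f = g o f *)
  comp_idl : forall X Y (f : Hom X Y), comp (idm Y) f = f;
  comp_idr : forall X Y (f : Hom X Y), comp f (idm X) = f;
  comp_assoc : forall X Y Z W (f : Hom X Y) (g : Hom Y Z) (h : Hom Z W),
      comp h (comp g f) = comp (comp h g) f
}.
Arguments idm {C} X : rename.
Arguments comp {C X Y Z} : rename.
Arguments Hom {C} : rename.

Record Functor (C : Category) := {
  fobj :> C -> C;
  fmap : forall X Y, Hom X Y -> Hom (fobj X) (fobj Y);
  fmap_id : forall X, fmap (idm X) = idm (fobj X);
  fmap_comp : forall X Y Z (f : Hom X Y) (g : Hom Y Z),
      fmap (comp g f) = comp (fmap g) (fmap f)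
}.
Arguments fmap {C} F {X Y} : rename.

Definition gcast (C : Category) (M : nat -> Functor C) (n m : nat)
    (e : n = m) (X : C) : Hom (M n X) (M m X) :=
  match e in _ = m' return Hom (M n X) (M m' X) with
  | erefl => idm (M n X) end.

Record GradedMonad (C : Category) := {
  GM :> nat -> Functor C;
  geta : forall X : C, Hom X (GM 0 X);
  gmu : forall (n k : nat) (X : C), Hom (GM n (GM k X)) (GM (n + k) X);
  geta_nat : forall X Y (f : Hom X Y),
      comp (fmap (GM 0) f) (geta X) = comp (geta Y) f;
  gmu_nat : forall n k X Y (f : Hom X Y),
      comp (fmap (GM (n + k)) f) (gmu n k X)
      = comp (gmu n k Y) (fmap (GM n) (fmap (GM k) f));
  (* mu^{0,n} . eta M_n = id  (up to the identification 0 + n = n) *)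
  gunit_l : forall n X,
      comp (gcast GM (add0n n) X) (comp (gmu 0 n X) (geta (GM n X)))
      = idm (GM n X);
  (* mu^{n,0} . M_n eta = id  (up to n + 0 = n) *)
  gunit_r : forall n X,
      comp (gcast GM (addn0 n) X) (comp (gmu n 0 X) (fmap (GM n) (geta X)))
      = idm (GM n X);
  (* mu^{n+k,m} . mu^{n,k} M_m = mu^{n,k+m} . M_n mu^{k,m}
     (up to (n + k) + m = n + (k + m)) *)
  gassoc : forall n k m X,
      comp (gcast GM (esym (addnA n k m)) X)
           (comp (gmu (n + k) m X) (gmu n k (GM m X)))
      = comp (gmu n (k + m) X) (fmap (GM n) (gmu k m X))
}.
Arguments geta {C} M X : rename.
Arguments gmu {C} M n k X : rename.

Section GradedDefs.
Variable C : Category.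
Variable M : GradedMonad C.

Definition is_coequalizer (A B Q : C) (g h : Hom A B) (e : Hom B Q) : Prop :=
  comp e g = comp e h /\
  forall (Z : C) (q : Hom B Z), comp q g = comp q h ->
    exists u : Hom Q Z, comp u e = q /\
      forall u' : Hom Q Z, comp u' e = q -> u' = u.

Definition depth1 : Prop :=
  forall (n : nat) (X : C),
    is_coequalizer (gmu M 1 0 (M n X)) (fmap (M 1) (gmu M 0 n X)) (gmu M 1 n X).

Definition kstar (X Y : C) (k : nat) (f : Hom X (M k Y)) (n : nat)
  : Hom (M n X) (M (n + k) Y) := comp (gmu M n k Y) (fmap (M n) f).

Record M0alg := {
  m0car : C;
  m0str : Hom (M 0 m0car) m0car;
  m0_unit : comp m0str (geta M m0car) = idm m0car;
  m0_assoc : comp m0str (gmu M 0 0 m0car) = comp m0str (fmap (M 0) m0str)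
}.

Definition is_M0hom (A B : C) (a : Hom (M 0 A) A) (b : Hom (M 0 B) B)
  (h : Hom A B) : Prop := comp h a = comp b (fmap (M 0) h).

(* Graded M_1-algebra axioms on raw data (A0, A1, a00, a01, a10):
   a^{0,m} eta = id, and a^{m+r,k} mu^{m,r}_{A_k} = a^{m,r+k} M_m a^{r,k}
   for all m, r, k with m + r + k <= 1. *)
Definition is_M1alg (A0 A1 : C) (a00 : Hom (M 0 A0) A0) (a01 : Hom (M 0 A1) A1)
  (a10 : Hom (M 1 A0) A1) : Prop :=
  [/\ comp a00 (geta M A0) = idm A0,
      comp a01 (geta M A1) = idm A1,
      (* (m,r,k) = (0,0,0) *)
      comp a00 (gmu M 0 0 A0) = comp a00 (fmap (M 0) a00),
      (* (0,0,1) *)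
      comp a01 (gmu M 0 0 A1) = comp a01 (fmap (M 0) a01)
    & (* (0,1,0) *)
      comp a10 (gmu M 0 1 A0) = comp a01 (fmap (M 0) a10)]
  /\ (* (1,0,0) *)
      comp a10 (gmu M 1 0 A0) = comp a10 (fmap (M 1) a00).

Definition is_M1hom (A0 A1 : C) (a00 : Hom (M 0 A0) A0) (a01 : Hom (M 0 A1) A1)
  (a10 : Hom (M 1 A0) A1)
  (B0 B1 : C) (b00 : Hom (M 0 B0) B0) (b01 : Hom (M 0 B1) B1)
  (b10 : Hom (M 1 B0) B1) (f0 : Hom A0 B0) (f1 : Hom A1 B1) : Prop :=
  [/\ comp f0 a00 = comp b00 (fmap (M 0) f0),
      comp f1 a01 = comp b01 (fmap (M 0) f1)
    & comp f1 a10 = comp b10 (fmap (M 1) f0)].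

Record M1alg_over (A0 : C) (a00 : Hom (M 0 A0) A0) := {
  m1car : C;
  m1str01 : Hom (M 0 m1car) m1car;
  m1str10 : Hom (M 1 A0) m1car;
  m1_ax : is_M1alg a00 m1str01 m1str10
}.

Definition is_free_M1alg (A0 : C) (a00 : Hom (M 0 A0) A0)
    (B : M1alg_over a00) : Prop :=
  forall (C0 : C) (c00 : Hom (M 0 C0) C0) (D : M1alg_over c00) (h : Hom A0 C0),
    is_M0hom a00 c00 h ->
    exists h1 : Hom (m1car B) (m1car D),
      is_M1hom a00 (m1str01 B) (m1str10 B) c00 (m1str01 D) (m1str10 D) h h1 /\
      forall h1', is_M1hom a00 (m1str01 B) (m1str10 B)
                           c00 (m1str01 D) (m1str10 D) h h1' -> h1' = h1.

(* The functor Mbar_1 : EM(M_0) -> EM(M_0) exists: every M_0-algebra has a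
   free graded M_1-algebra. *)
Definition Mbar1_exists : Prop :=
  forall A : M0alg, exists B : M1alg_over (m0str A), is_free_M1alg B.

End GradedDefs.

From mathcomp Require Import all_boot.

(* The pair (f^*_0, f^*_1) is an M_1-homomorphism because the Kleisli star
   commutes with multiplication, by naturality and associativity of mu.
   Conversely, mu^{1,0} . M_1 eta = id shows that any h1 is determined by
   h1 . mu^{1,0}, which the homomorphism condition fixes to
   mu^{1,k} . M_1 f^*_0; precomposing with M_1 eta yields f^*_1. *)

Section GradedMonadLaws.
Variables (C : Category) (M : GradedMonad C).

Lemma gcast_id n (e : n = n) (X : C) : gcast M e X = idm _.
Proof. by rewrite (eq_irrelevance e erefl). Qed.

Lemma gmu0_assoc n k (X : C) :
  comp (gmu M n k X) (gmu M 0 n (M k X))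
  = comp (gmu M 0 (n + k) X) (fmap (M 0) (gmu M n k X)).
Proof. by have := gassoc M 0 n k X; rewrite gcast_id comp_idl. Qed.

Lemma gmu10_assoc k (X : C) :
  comp (gmu M 1 k X) (gmu M 1 0 (M k X))
  = comp (gmu M 1 k X) (fmap (M 1) (gmu M 0 k X)).
Proof. by have := gassoc M 1 0 k X; rewrite gcast_id comp_idl. Qed.

Lemma gmu0_geta n (X : C) : comp (gmu M 0 n X) (geta M (M n X)) = idm _.
Proof. by have := gunit_l M n X; rewrite gcast_id comp_idl. Qed.

Lemma gmu10_fmap_geta (X : C) :
  comp (gmu M 1 0 X) (fmap (M 1) (geta M X)) = idm _.
Proof. by have := gunit_r M 1 X; rewrite gcast_id comp_idl. Qed.

Lemma eq_comp_gmu10 (X B0 B1 : C) (b10 : Hom (M 1 B0) B1)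
    (h0 : Hom (M 0 X) B0) (h1 : Hom (M 1 X) B1) :
  comp h1 (gmu M 1 0 X) = comp b10 (fmap (M 1) h0) ->
  h1 = comp b10 (fmap (M 1) (comp h0 (geta M X))).
Proof.
move=> h1_gmu.
by rewrite -[h1]comp_idr -gmu10_fmap_geta comp_assoc h1_gmu fmap_comp comp_assoc.
Qed.

Section KleisliStar.
Variables (X Y : C) (k : nat) (f : Hom X (M k Y)).

Lemma kstar0_geta : comp (kstar f 0) (geta M X) = f.
Proof.
by rewrite /kstar -comp_assoc (geta_nat M f) comp_assoc gmu0_geta comp_idl.
Qed.

Lemma kstar_gmu0 m :
  comp (kstar f m) (gmu M 0 m X)
  = comp (gmu M 0 (m + k) Y) (fmap (M 0) (kstar f m)).
Proof.
rewrite /kstar -comp_assoc (gmu_nat M 0 m) comp_assoc gmu0_assoc.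
by rewrite fmap_comp comp_assoc.
Qed.

Lemma kstar_gmu10 :
  comp (kstar f 1) (gmu M 1 0 X)
  = comp (gmu M 1 k Y) (fmap (M 1) (kstar f 0)).
Proof.
rewrite /kstar -comp_assoc (gmu_nat M 1 0) comp_assoc gmu10_assoc.
by rewrite fmap_comp comp_assoc.
Qed.

Lemma is_M1hom_kstar :
  is_M1hom (gmu M 0 0 X) (gmu M 0 1 X) (gmu M 1 0 X)
           (gmu M 0 k Y) (gmu M 0 k.+1 Y) (gmu M 1 k Y)
           (kstar f 0) (kstar f 1).
Proof. by split; [exact: kstar_gmu0 | exact: kstar_gmu0 | exact: kstar_gmu10]. Qed.

End KleisliStar.
End GradedMonadLaws.

Theorem lemma5 (C : Category) (M : GradedMonad C)
  (Hdepth : depth1 M) (HMbar : Mbar1_exists M)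
  (X Y : C) (k : nat) (f : Hom X (M k Y)) :
  forall h1 : Hom (M 1 X) (M k.+1 Y),
    is_M1hom (gmu M 0 0 X) (gmu M 0 1 X) (gmu M 1 0 X)
               (gmu M 0 k Y) (gmu M 0 k.+1 Y) (gmu M 1 k Y)
               (kstar f 0) h1
    <-> h1 = kstar f 1.
Proof.
move=> h1; split=> [[_ _ /eq_comp_gmu10] | ->]; last exact: is_M1hom_kstar.
by rewrite kstar0_geta.
Qed.
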